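(* Let $(X,d,f)$ be a dynamical system and $\mathcal{A}=\{\mathcal{U}_n\}_{n\in\mathbb{N}}$ a tame defining sequence of $(X,d)$, and assume that for some $n$ the partition $\mathcal{U}_n$ consists of compact sets. Then if $f$ is uniformly continuous, $f$ has the shadowing property if and only if it has the finite shadowing property.
   Context: Spaces are nonempty separable metrizable; $d$ admissible, $f$ continuous. A partition is a cover by pairwise disjoint nonempty clopen sets. A defining sequence is a sequence of partitions $\{\mathcal{U}_n\}$, each refining the previous, whose union is a basis; tame if $\sup\{\operatorname{diam}O:O\in\mathcal{U}_n\}\to0$ and each $\mathcal{U}_n$ is $\rho_n$-separated for some $\rho_n>0$ (points in distinct elements are at distance $\ge\rho_n$). A $\delta$-pseudo-orbit is a finite or infinite sequence $(x_i)$ with $d(f(x_i),x_{i+1})<\delta$; $x$ $\varepsilon$-shadows it if $d(f^i(x),x_i)<\varepsilon$ for all indices. Finite shadowing: $\forall\varepsilon>0\,\exists\delta>0$ every finite $\delta$-pseudo-orbit is $\varepsilon$-shadowed; shadowing: same for infinite pseudo-orbits. *)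

From Stdlib Require Import Reals List.
Open Scope R_scope.

Definition set (X : Type) := X -> Prop.

Definition is_metric {X : Type} (d : X -> X -> R) : Prop :=
  (forall x y, 0 <= d x y) /\
  (forall x y, d x y = 0 <-> x = y) /\
  (forall x y, d x y = d y x) /\
  (forall x y z, d x z <= d x y + d y z).

(* separable: there is a countable dense sequence (this also makes X nonempty) *)
Definition separable {X : Type} (d : X -> X -> R) : Prop :=
  exists s : nat -> X, forall x eps, 0 < eps -> exists n, d x (s n) < eps.

Definition ball {X : Type} (d : X -> X -> R) (x : X) (r : R) : set X :=
  fun y => d x y < r.

Definition is_open {X : Type} (d : X -> X -> R) (U : set X) : Prop :=
  forall x, U x -> exists r, 0 < r /\ forall y, ball d x r y -> U y.

Definition clopen {X : Type} (d : X -> X -> R) (U : set X) : Prop :=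
  is_open d U /\ is_open d (fun x => ~ U x).

Definition compact_set {X : Type} (d : X -> X -> R) (K : set X) : Prop :=
  forall (I : Type) (G : I -> set X),
    (forall i, is_open d (G i)) ->
    (forall x, K x -> exists i, G i x) ->
    exists l : list I, forall x, K x -> exists i, In i l /\ G i x.

Definition partition {X : Type} (d : X -> X -> R) (P : set (set X)) : Prop :=
  (forall U, P U -> (exists x, U x) /\ clopen d U) /\
  (forall x, exists U, P U /\ U x) /\
  (forall U V, P U -> P V -> U <> V -> forall x, ~ (U x /\ V x)).

Definition refines {X : Type} (P Q : set (set X)) : Prop :=
  forall V, P V -> exists U, Q U /\ forall x, V x -> U x.

Definition is_basis_union {X : Type} (d : X -> X -> R) (A : nat -> set (set X)) : Prop :=
  forall O x, is_open d O -> O x ->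
    exists n U, A n U /\ U x /\ forall y, U y -> O y.

Definition defining_sequence {X : Type} (d : X -> X -> R) (A : nat -> set (set X)) : Prop :=
  (forall n, partition d (A n)) /\
  (forall n, refines (A (S n)) (A n)) /\
  is_basis_union d A.

Definition mesh_to_zero {X : Type} (d : X -> X -> R) (A : nat -> set (set X)) : Prop :=
  forall eps, 0 < eps -> exists N, forall n, (N <= n)%nat ->
    forall O, A n O -> forall x y, O x -> O y -> d x y <= eps.

Definition separated {X : Type} (d : X -> X -> R) (P : set (set X)) (rho : R) : Prop :=
  forall U V, P U -> P V -> U <> V -> forall x y, U x -> V y -> rho <= d x y.

Definition tame_defining_sequence {X : Type} (d : X -> X -> R) (A : nat -> set (set X)) : Prop :=
  defining_sequence d A /\ mesh_to_zero d A /\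
  (forall n, exists rho, 0 < rho /\ separated d (A n) rho).

Definition continuous_map {X : Type} (d : X -> X -> R) (f : X -> X) : Prop :=
  forall x eps, 0 < eps -> exists delta, 0 < delta /\
    forall y, d x y < delta -> d (f x) (f y) < eps.

Definition uniformly_continuous {X : Type} (d : X -> X -> R) (f : X -> X) : Prop :=
  forall eps, 0 < eps -> exists delta, 0 < delta /\
    forall x y, d x y < delta -> d (f x) (f y) < eps.

Definition finite_pseudo_orbit {X : Type} (d : X -> X -> R) (f : X -> X)
    (delta : R) (n : nat) (xs : nat -> X) : Prop :=
  forall i, (i < n)%nat -> d (f (xs i)) (xs (S i)) < delta.

Definition finite_shadows {X : Type} (d : X -> X -> R) (f : X -> X)
    (eps : R) (n : nat) (xs : nat -> X) (z : X) : Prop :=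
  forall i, (i <= n)%nat -> d (Nat.iter i f z) (xs i) < eps.

Definition pseudo_orbit {X : Type} (d : X -> X -> R) (f : X -> X)
    (delta : R) (xs : nat -> X) : Prop :=
  forall i, d (f (xs i)) (xs (S i)) < delta.

Definition shadows {X : Type} (d : X -> X -> R) (f : X -> X)
    (eps : R) (xs : nat -> X) (z : X) : Prop :=
  forall i, d (Nat.iter i f z) (xs i) < eps.

Definition finite_shadowing {X : Type} (d : X -> X -> R) (f : X -> X) : Prop :=
  forall eps, 0 < eps -> exists delta, 0 < delta /\
    forall n xs, finite_pseudo_orbit d f delta n xs ->
      exists z, finite_shadows d f eps n xs z.

Definition shadowing {X : Type} (d : X -> X -> R) (f : X -> X) : Prop :=
  forall eps, 0 < eps -> exists delta, 0 < delta /\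
    forall xs, pseudo_orbit d f delta xs ->
      exists z, shadows d f eps xs z.

From Stdlib Require Import Reals.
From Stdlib Require Import Lra Lia Classical IndefiniteDescription.
From Stdlib Require List.
Open Scope R_scope.

(* Shadowing gives finite shadowing by continuing a finite pseudo-orbit along
   the true orbit of its last point.  Conversely, let [rho] separate a partition
   [A m] into compact pieces and shadow every initial segment of a pseudo-orbit
   [xs] within [e < rho]: all shadowing points lie within [rho] of [xs 0], hence
   in the one compact piece containing [xs 0], so they have a cluster point [z];
   by continuity of the iterates of [f], [z] shadows the whole of [xs] within
   [e]. *)

Definition cluster_point {X : Type} (d : X -> X -> R) (zs : nat -> X) (z : X) :=
  forall r N, 0 < r -> exists n, (N <= n)%nat /\ d z (zs n) < r.

Lemma list_nat_upper_bound {I : Type} (g : I -> nat) (l : list I) :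
  exists M, forall i, List.In i l -> (g i <= M)%nat.
Proof.
  induction l as [|a l [M HM]].
  - exists 0%nat. intros i [].
  - exists (Nat.max (g a) M). intros i [<-|Hi]; [lia|].
    specialize (HM i Hi). lia.
Qed.

Lemma continuous_iter {X : Type} (d : X -> X -> R) (f : X -> X) (i : nat) :
  continuous_map d f -> continuous_map d (Nat.iter i f).
Proof.
  intros Hf. induction i as [|i IH]; intros z eps Heps.
  - exists eps. split; auto.
  - destruct (Hf (Nat.iter i f z) eps Heps) as [eta [Heta Hfeta]].
    destruct (IH z eta Heta) as [delta [Hdelta Hiter]].
    exists delta. split; auto. intros y Hy. apply Hfeta, Hiter, Hy.
Qed.

Lemma separated_partition_mem {X : Type} (d : X -> X -> R) (P : set (set X))
    (rho : R) (U : set X) (x y : X) :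
  partition d P -> separated d P rho -> P U -> U x -> d x y < rho -> U y.
Proof.
  intros [_ [Hcover _]] Hsep HU Ux Hxy.
  destruct (Hcover y) as [V [HV Vy]].
  destruct (classic (U = V)) as [<-|HUV]; auto.
  specialize (Hsep U V HU HV HUV x y Ux Vy). lra.
Qed.

Section Metric.

Variables (X : Type) (d : X -> X -> R).
Hypothesis d_metric : is_metric d.

Lemma dist_refl (x : X) : d x x = 0.
Proof. destruct d_metric as [_ [H _]]. apply H. reflexivity. Qed.

Lemma dist_sym (x y : X) : d x y = d y x.
Proof. destruct d_metric as [_ [_ [H _]]]. apply H. Qed.

Lemma dist_triangle (x y z : X) : d x z <= d x y + d y z.
Proof. destruct d_metric as [_ [_ [_ H]]]. apply H. Qed.

Lemma ball_open (x : X) (r : R) : is_open d (ball d x r).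
Proof.
  intros y Hy. exists (r - d x y). split; [unfold ball in Hy; lra|].
  intros z Hz. unfold ball in *. pose proof (dist_triangle x y z). lra.
Qed.

Section CompactCluster.

Variable zs : nat -> X.

Record far_ball := {
  far_center : X;
  far_index : nat;
  far_radius : R;
  far_spec : forall n, (far_index <= n)%nat -> far_radius <= d far_center (zs n) }.

(* If no point were a cluster point, the far balls would cover [K]; a finite
   subfamily cannot contain [zs M] for [M] beyond all of its indices. *)
Lemma compact_cluster_point (K : set X) :
  compact_set d K -> (forall n, K (zs n)) -> exists z, cluster_point d zs z.
Proof.
  intros HK HzsK. apply NNPP. intros Hnone.
  assert (Hcover : forall x, K x -> exists b, ball d (far_center b) (far_radius b) x).
  { intros x _.
    pose proof (not_ex_all_not _ _ Hnone x) as Hx.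
    apply not_all_ex_not in Hx as [r Hx].
    apply not_all_ex_not in Hx as [N Hx].
    apply imply_to_and in Hx as [Hr Hfar].
    assert (Hspec : forall n, (N <= n)%nat -> r <= d x (zs n)).
    { intros n Hn. apply Rnot_lt_le. intros Hlt. apply Hfar. exists n. auto. }
    exists (Build_far_ball x N r Hspec). unfold ball. simpl.
    rewrite dist_refl. exact Hr. }
  destruct (HK _ _ (fun b => ball_open (far_center b) (far_radius b)) Hcover)
    as [l Hl].
  destruct (list_nat_upper_bound far_index l) as [M HM].
  destruct (Hl (zs M) (HzsK M)) as [b [Hb Hball]].
  pose proof (far_spec b M (HM b Hb)). unfold ball in Hball. lra.
Qed.

End CompactCluster.

Lemma cluster_point_dist_le (g : X -> X) (zs : nat -> X) (z y : X) (N : nat)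
    (e : R) :
  continuous_map d g -> cluster_point d zs z ->
  (forall n, (N <= n)%nat -> d (g (zs n)) y < e) -> d (g z) y <= e.
Proof.
  intros Hg Hz Hclose. apply Rnot_lt_le. intros Hgap.
  destruct (Hg z (d (g z) y - e)) as [delta [Hdelta Hcont]]; [lra|].
  destruct (Hz delta N Hdelta) as [n [Hn Hzn]].
  specialize (Hcont _ Hzn). specialize (Hclose n Hn).
  pose proof (dist_triangle (g z) (g (zs n)) y). lra.
Qed.

Section Shadowing.

Variable f : X -> X.

Definition orbit_extension (n : nat) (xs : nat -> X) (i : nat) : X :=
  if Nat.leb i n then xs i else Nat.iter (i - n) f (xs n).

Lemma orbit_extension_le n xs i :
  (i <= n)%nat -> orbit_extension n xs i = xs i.
Proof. intros Hi. unfold orbit_extension. apply Nat.leb_le in Hi. now rewrite Hi. Qed.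

Lemma orbit_extension_ge n xs i :
  (n <= i)%nat -> orbit_extension n xs i = Nat.iter (i - n) f (xs n).
Proof.
  intros Hi. unfold orbit_extension. destruct (Nat.leb_spec i n); [|reflexivity].
  replace i with n by lia. now rewrite Nat.sub_diag.
Qed.

Lemma pseudo_orbit_orbit_extension delta n xs :
  0 < delta -> finite_pseudo_orbit d f delta n xs ->
  pseudo_orbit d f delta (orbit_extension n xs).
Proof.
  intros Hdelta Hxs i. destruct (Nat.lt_ge_cases i n) as [Hi|Hi].
  - rewrite !orbit_extension_le by lia. apply Hxs, Hi.
  - rewrite !orbit_extension_ge by lia.
    replace (S i - n)%nat with (S (i - n)) by lia. simpl.
    rewrite dist_refl. exact Hdelta.
Qed.

Lemma shadowing_finite_shadowing : shadowing d f -> finite_shadowing d f.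
Proof.
  intros Hsh eps Heps. destruct (Hsh eps Heps) as [delta [Hdelta Hshadow]].
  exists delta. split; auto. intros n xs Hxs.
  destruct (Hshadow _ (pseudo_orbit_orbit_extension delta n xs Hdelta Hxs))
    as [z Hz].
  exists z. intros i Hi. rewrite <- (orbit_extension_le n xs i Hi). apply Hz.
Qed.

Lemma cluster_point_finite_shadows e xs zs z :
  continuous_map d f -> (forall n, finite_shadows d f e n xs (zs n)) ->
  cluster_point d zs z -> forall i, d (Nat.iter i f z) (xs i) <= e.
Proof.
  intros Hf Hzs Hz i.
  apply (cluster_point_dist_le (Nat.iter i f) zs z (xs i) i e); auto.
  - apply continuous_iter, Hf.
  - intros n Hn. apply Hzs, Hn.
Qed.

Lemma finite_shadowing_shadowing (P : set (set X)) (rho : R) :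
  continuous_map d f -> partition d P -> 0 < rho -> separated d P rho ->
  (forall U, P U -> compact_set d U) ->
  finite_shadowing d f -> shadowing d f.
Proof.
  intros Hf HP Hrho Hsep Hcompact Hfsh eps Heps.
  set (e := Rmin (eps / 2) (rho / 2)).
  assert (He : 0 < e) by (apply Rmin_glb_lt; lra).
  assert (He_eps : e < eps) by (unfold e; pose proof (Rmin_l (eps / 2) (rho / 2)); lra).
  assert (He_rho : e < rho) by (unfold e; pose proof (Rmin_r (eps / 2) (rho / 2)); lra).
  destruct (Hfsh e He) as [delta [Hdelta Hfshadow]].
  exists delta. split; auto. intros xs Hxs.
  assert (Hsegments : forall n, exists z, finite_shadows d f e n xs z).
  { intros n. apply Hfshadow. intros i _. apply Hxs. }
  destruct (functional_choice _ Hsegments) as [zs Hzs].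
  destruct (proj1 (proj2 HP) (xs 0%nat)) as [U [HU Ux0]].
  assert (HzsU : forall n, U (zs n)).
  { intros n. apply (separated_partition_mem d P rho U (xs 0%nat)); auto.
    rewrite dist_sym. specialize (Hzs n 0%nat (Nat.le_0_l n)). simpl in Hzs. lra. }
  destruct (compact_cluster_point zs U (Hcompact U HU) HzsU) as [z Hz].
  exists z. intros i.
  pose proof (cluster_point_finite_shadows e xs zs z Hf Hzs Hz i). lra.
Qed.

End Shadowing.

End Metric.

Theorem proposition4p19 (X : Type) (d : X -> X -> R) (f : X -> X)
  (A : nat -> set (set X)) :
  is_metric d -> separable d -> continuous_map d f ->
  tame_defining_sequence d A ->
  (exists n, forall U, A n U -> compact_set d U) ->
  uniformly_continuous d f ->
  (shadowing d f <-> finite_shadowing d f).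
Proof.
  intros Hd _ Hf [[HA _] [_ HAsep]] [m Hcompact] _.
  destruct (HAsep m) as [rho [Hrho Hsep]].
  split.
  - apply shadowing_finite_shadowing, Hd.
  - apply (finite_shadowing_shadowing X d Hd f (A m) rho); auto.
Qed.
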